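(* Let $(X,Y)\sim P_{XY}$ be a pair of random variables on finite alphabets $\mathcal{X}\times\mathcal{Y}$, and let $\varepsilon,\varepsilon_0,\varepsilon_1,\varepsilon_2,\varepsilon_3>0$ with $\varepsilon_0+\varepsilon_1+\varepsilon_2+\varepsilon_3\le\varepsilon$. (Lower bounds.) For every distributed encoding protocol $(e_{\mathcal X},e_{\mathcal Y},U)\in\Lambda_\varepsilon$ with codomains $\mathcal{C}_{\mathcal X},\mathcal{C}_{\mathcal Y}$, $$\log|\mathcal C_{\mathcal X}|\ge H_0^{\varepsilon}(X|Y),\qquad \log|\mathcal C_{\mathcal Y}|\ge H_0^{\varepsilon}(Y|X),\qquad \log|\mathcal C_{\mathcal X}|+\log|\mathcal C_{\mathcal Y}|\ge H_0^{\varepsilon}(X,Y).$$ (Achievability.) Let $\delta\ge 0$ be such that $\Pr\{(X,Y)\notin\mathcal{A}_\delta(P_{XY})\}\le\varepsilon_0$. Then for any finite sets $\mathcal C_{\mathcal X},\mathcal C_{\mathcal Y}$ satisfying $$\log|\mathcal C_{\mathcal X}|\ge \Xi^\delta_{\max}(P_{XY})-\Xi^\delta_{\min}(P_Y)-\log\varepsilon_1,$$ $$\log|\mathcal C_{\mathcal Y}|\ge \Xi^\delta_{\max}(P_{XY})-\Xi^\delta_{\min}(P_X)-\log\varepsilon_2,$$ $$\log|\mathcal C_{\mathcal X}|+\log|\mathcal C_{\mathcal Y}|\ge \Xi^\delta_{\max}(P_{XY})-\log\varepsilon_3,$$ there exists a distributed encoding protocol $(e_{\mathcal X},e_{\mathcal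 Y},U)\in\Lambda_\varepsilon$ with these codomains.
   Context: All logarithms are base 2; all random variables are discrete on finite alphabets. For a random variable $W$ on a finite alphabet $\mathcal W$, $H(W)$ is the Shannon entropy. Smooth entropies: for $\varepsilon\ge0$ and jointly distributed $(X,Y)$, the infima/suprema below range over pairs $(\bar X,\bar Y)$ defined on a common probability space with $(X,Y)$ such that $\Pr[(\bar X,\bar Y)\neq(X,Y)]\le\varepsilon$. $H_0^\varepsilon(X|Y):=\log\big[\inf_{(\bar X,\bar Y)}\max_{y}|\{x:P_{\bar X|\bar Y=y}(x)>0\}|\big]$; the unconditional versions are obtained with $Y$ trivial (constant). In particular $H_0^\varepsilon(X,Y)$ is $H_0^\varepsilon$ of the pair $W=(X,Y)$. $H_\infty^\delta(W):=-\log\big[\inf_{\bar W:\Pr[\bar W\neq W]\le\delta}\max_w P_{\bar W}(w)\big]$. $H_{-\infty}^\delta(W):=-\log\big[\sup_{\bar W:\Pr[\bar W\neq W]\le\delta}\min_{w:P_{\bar W}(w)>0}P_{\bar W}(w)\big]$. For a random variable $W$ on finite alphabet $\mathcal W$ and $\delta\ge0$: $\Xi^\delta_{\min}(P_W):=H(W)-|H(W)-H^\delta_\infty(W)|-\delta\log|\mathcal W|$ and $\Xi^\delta_{\max}(P_W):=H(W)+|H(W)-H^\delta_{-\infty}(W)|+\delta\log|\mathcal W|$ (for $W=(X,Y)$, $\mathcal W=\mathcal X\times\mathcal Y$). $\mathcal A_\delta(P_X):=\{x:\Xi^\delta_{\min}(P_X)\le-\log P_X(x)\le\Xi^\delta_{\max}(P_X)\}$,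 similarly $\mathcal A_\delta(P_Y)$, and $\mathcal A_\delta(P_{XY}):=\{(x,y):\Xi^\delta_{\min}(P_{XY})\le-\log P_{XY}(x,y)\le\Xi^\delta_{\max}(P_{XY}),\ x\in\mathcal A_\delta(P_X),\ y\in\mathcal A_\delta(P_Y)\}$. Distributed encoding protocols: for $0\le\varepsilon\le1$, $\Lambda_\varepsilon=\Lambda^P_\varepsilon(\mathcal X\times\mathcal Y\to\mathcal C_{\mathcal X}\times\mathcal C_{\mathcal Y})$ is the set of triples $(e_{\mathcal X},e_{\mathcal Y},U)$ where $U$ is a random variable with finite range $\mathcal U$, independent of $(X,Y)$ (shared randomness), $e_{\mathcal X}:\mathcal X\times\mathcal U\to\mathcal C_{\mathcal X}$, $e_{\mathcal Y}:\mathcal Y\times\mathcal U\to\mathcal C_{\mathcal Y}$, such that there exists a decoding function $g:\mathcal C_{\mathcal X}\times\mathcal C_{\mathcal Y}\times\mathcal U\to\mathcal X\times\mathcal Y$ with $\Pr\{g(e_{\mathcal X}(X,U),e_{\mathcal Y}(Y,U),U)\neq(X,Y)\}\le\varepsilon$. The encoding lengths are $\log|\mathcal C_{\mathcal X}|$ and $\log|\mathcal C_{\mathcal Y}|$. *)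

From mathcomp Require Import all_boot.
From Stdlib Require Import Reals ClassicalEpsilon.
Set Implicit Arguments. Unset Strict Implicit. Unset Printing Implicit Defensive.
Open Scope R_scope.

Definition log2 (x : R) : R := ln x / ln 2.

Definition Rleb (x y : R) : bool := if Rle_dec x y then true else false.
Definition Rltb (x y : R) : bool := if Rlt_dec x y then true else false.

Definition is_pmf (T : finType) (P : T -> R) : Prop :=
  (forall t, 0 <= P t) /\ \big[Rplus/0]_(t : T) P t = 1.

Definition is_glb (E : R -> Prop) (m : R) : Prop :=
  (forall x, E x -> m <= x) /\ (forall b, (forall x, E x -> b <= x) -> b <= m).
Definition Rinf (E : R -> Prop) : R := epsilon (inhabits 0) (is_glb E).
Definition Rsup (E : R -> Prop) : R := epsilon (inhabits 0) (is_lub E).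

(* A smoothing of W ~ P: the joint law Q of (W, Wbar) on a common
   probability space (Q (w, w') = Pr[W = w, Wbar = w']), with
   Pr[Wbar <> W] <= d. *)
Definition smoothing (T : finType) (P : T -> R) (d : R) (Q : T * T -> R) : Prop :=
  is_pmf Q /\
  (forall w, \big[Rplus/0]_(w' : T) Q (w, w') = P w) /\
  \big[Rplus/0]_(p : T * T | p.1 != p.2) Q p <= d.

Definition bar_law (T : finType) (Q : T * T -> R) (w' : T) : R :=
  \big[Rplus/0]_(w : T) Q (w, w').

Definition cond_supp_size (A B : finType) (Q : (A * B) * (A * B) -> R) (b : B) : nat :=
  #|[set a : A | Rltb 0 (bar_law Q (a, b))]|.

Definition H0cond (A B : finType) (P : A * B -> R) (eps : R) : R :=
  log2 (Rinf (fun r => exists Q, smoothing P eps Q /\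
                 r = INR (\max_(b : B) cond_supp_size Q b))).

Definition H0 (T : finType) (P : T -> R) (eps : R) : R :=
  log2 (Rinf (fun r => exists Q, smoothing P eps Q /\
                 r = INR #|[set w : T | Rltb 0 (bar_law Q w)]|)).

Definition Hinf (T : finType) (P : T -> R) (d : R) : R :=
  - log2 (Rinf (fun r => exists Q, smoothing P d Q /\
                 r = \big[Rmax/0]_(w : T) bar_law Q w)).

Definition Hminf (T : finType) (P : T -> R) (d : R) : R :=
  - log2 (Rsup (fun r => exists Q, smoothing P d Q /\
                 r = \big[Rmin/1]_(w : T | Rltb 0 (bar_law Q w)) bar_law Q w)).

Definition entropy (T : finType) (P : T -> R) : R :=
  - \big[Rplus/0]_(w : T) (P w * log2 (P w)).

Definition Xi_min (T : finType) (P : T -> R) (d : R) : R :=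
  entropy P - Rabs (entropy P - Hinf P d) - d * log2 (INR #|T|).
Definition Xi_max (T : finType) (P : T -> R) (d : R) : R :=
  entropy P + Rabs (entropy P - Hminf P d) + d * log2 (INR #|T|).

Definition margX (A B : finType) (P : A * B -> R) (a : A) : R :=
  \big[Rplus/0]_(b : B) P (a, b).
Definition margY (A B : finType) (P : A * B -> R) (b : B) : R :=
  \big[Rplus/0]_(a : A) P (a, b).
Definition swapP (A B : finType) (P : A * B -> R) (p : B * A) : R := P (p.2, p.1).

(* typical set A_delta(P_W) (w with P w > 0, so that -log P w is finite) *)
Definition inA (T : finType) (P : T -> R) (d : R) (w : T) : bool :=
  [&& Rltb 0 (P w), Rleb (Xi_min P d) (- log2 (P w)) & Rleb (- log2 (P w)) (Xi_max P d)].

Definition inA_joint (A B : finType) (P : A * B -> R) (d : R) (p : A * B) : bool :=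
  [&& inA P d p, inA (margX P) d p.1 & inA (margY P) d p.2].

Definition prob_notA (A B : finType) (P : A * B -> R) (d : R) : R :=
  \big[Rplus/0]_(p : A * B | ~~ inA_joint P d p) P p.

Definition in_Lambda (A B CX CY U : finType) (P : A * B -> R) (eps : R)
    (PU : U -> R) (eX : A * U -> CX) (eY : B * U -> CY) : Prop :=
  is_pmf PU /\
  exists g : CX -> CY -> U -> A * B,
    \big[Rplus/0]_(p : A * B) \big[Rplus/0]_(u : U | g (eX (p.1, u)) (eY (p.2, u)) u != p)
        (P p * PU u) <= eps.

From HB Require Import structures.
From mathcomp Require Import all_boot.
From Stdlib Require Import Reals Lra ClassicalEpsilon.
Set Implicit Arguments. Unset Strict Implicit. Unset Printing Implicit Defensive.
Open Scope R_scope.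

(* Averaging over the shared randomness U yields a value u of U for
   which the code is deterministic with error at most eps.  Moving (X,Y) to its
   decoded value is then an eps-smoothing (the joint law of (W, h W) for the map
   h = decoder o encoders); its support lies in the image of the codebooks, and
   given Y its first coordinate is determined by the X-codeword.  Hence
   |C_X| >= 2^{H_0^eps(X|Y)} and |C_X||C_Y| >= 2^{H_0^eps(X,Y)}; the bound on
   C_Y follows by exchanging the roles of the two sources.

   Random binning: each source is hashed by an independent
   uniformly random function into its codebook, and the decoder outputs a
   jointly typical pair in the received bins.  A typical pair is decoded wrongly
   only if another typical pair shares its bins (union bound); two distinct pairs
   collide with probability 1/|C_X|, 1/|C_Y| or 1/(|C_X||C_Y|), and typical sets
   are counted through probabilities (each typical point weighs at least
   2^{-Xi_max}).  The rate conditions make the three resulting terms at most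
   e1, e2, e3, and atypical pairs cost at most e0. *)

HB.instance Definition _ := Monoid.isComLaw.Build R 0 Rplus
  (fun a b c => esym (Rplus_assoc a b c)) Rplus_comm Rplus_0_l.
HB.instance Definition _ := Monoid.isComLaw.Build R 1 Rmult
  (fun a b c => esym (Rmult_assoc a b c)) Rmult_comm Rmult_1_l.
HB.instance Definition _ := Monoid.isMulLaw.Build R 0 Rmult Rmult_0_l Rmult_0_r.
HB.instance Definition _ := Monoid.isAddLaw.Build R Rmult Rplus
  Rmult_plus_distr_r Rmult_plus_distr_l.

Notation "\sum_ ( i | P ) F" := (\big[Rplus/0]_(i | P) F) : R_scope.
Notation "\sum_ ( i : T | P ) F" := (\big[Rplus/0]_(i : T | P) F) : R_scope.
Notation "\sum_ ( i : T ) F" := (\big[Rplus/0]_(i : T) F) : R_scope.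
Notation "\sum_ i F" := (\big[Rplus/0]_i F) : R_scope.

Lemma sum_le (I : finType) (A : pred I) (F G : I -> R) :
  (forall i, A i -> F i <= G i) -> \sum_(i | A i) F i <= \sum_(i | A i) G i.
Proof. by move=> h; apply: (big_ind2 (fun a b => a <= b)) => // *; lra. Qed.

Lemma sum_ge0 (I : finType) (A : pred I) (F : I -> R) :
  (forall i, A i -> 0 <= F i) -> 0 <= \sum_(i | A i) F i.
Proof. by move=> h; apply: (big_ind (fun a => 0 <= a)) => // *; lra. Qed.

Lemma sum_subset_le (I : finType) (A B : pred I) (F : I -> R) :
  (forall i, 0 <= F i) -> (forall i, A i -> B i) -> \sum_(i | A i) F i <= \sum_(i | B i) F i.
Proof.
move=> F0 AB; rewrite big_mkcond [X in _ <= X]big_mkcond /=.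
apply: sum_le => i _; case Ai: (A i); first by rewrite AB //; lra.
by case: (B i); [apply: F0 | lra].
Qed.

Lemma sum_lt (I : finType) (F G : I -> R) i0 :
  (forall i, F i <= G i) -> F i0 < G i0 -> \sum_i F i < \sum_i G i.
Proof.
move=> FG lt0; rewrite (bigD1 i0) // [X in _ < X](bigD1 i0) //=.
have := @sum_le _ (fun i => i != i0) F G (fun i _ => FG i); lra.
Qed.

Lemma sum_const (I : finType) (A : pred I) c : \sum_(i | A i) c = INR #|A| * c.
Proof.
rewrite -[X in INR X * _]sum1_card.
rewrite (big_morph INR (fun a b => plus_INR a b) (erefl (INR 0))) big_distrl /=.
by apply: eq_bigr => i _; rewrite Rmult_1_l.
Qed.

Lemma pmf_inhabited (T : finType) (P : T -> R) : is_pmf P -> exists t, 0 < P t.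
Proof.
move=> [P0 P1]; apply: NNPP => none; move: P1; rewrite big1; first lra.
by move=> t _; case: (P0 t) => // pos; case: none; exists t.
Qed.

Lemma pmf_average_le (I : finType) (PU : I -> R) (f : I -> R) e :
  is_pmf PU -> \sum_i PU i * f i <= e -> exists i, f i <= e.
Proof.
move=> hPU avg; have [i0 pos0] := pmf_inhabited hPU; have [PU0 PU1] := hPU.
apply: NNPP => none.
have big_f i : e < f i by apply: Rnot_le_lt => fi; apply: none; exists i.
have : \sum_i PU i * e < \sum_i PU i * f i.
  apply: (@sum_lt _ _ _ i0) => [i|]; last exact: Rmult_lt_compat_l.
  by apply: Rmult_le_compat_l => //; have := big_f i; lra.
by rewrite -big_distrl PU1 /=; lra.
Qed.

Lemma union_bound (I J : finType) (C : pred J) (A : pred I) (B : J -> pred I)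
    (F : I -> R) :
  (forall i, 0 <= F i) -> (forall u, A u -> exists2 j, C j & B j u) ->
  \sum_(u | A u) F u <= \sum_(j | C j) \sum_(u | B j u) F u.
Proof.
move=> F0 cover.
rewrite (eq_bigr (fun j => \sum_u (if B j u then F u else 0))); last first.
  by move=> j _; rewrite big_mkcond.
rewrite exchange_big big_mkcond /=; apply: sum_le => u _.
case Au: (A u); last by apply: sum_ge0 => j _; case: (B j u) => //; lra.
have [j Cj Bju] := cover u Au; rewrite (bigD1 j) //= Bju.
have : 0 <= \sum_(k | C k && (k != j)) (if B k u then F u else 0).
  by apply: sum_ge0 => k _; case: (B k u) => //; lra.
lra.
Qed.

Lemma RlebP x y : Rleb x y -> x <= y.
Proof. by rewrite /Rleb; case: Rle_dec. Qed.

Lemma RltbP x y : Rltb x y -> x < y.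
Proof. by rewrite /Rltb; case: Rlt_dec. Qed.

Lemma ln2_pos : 0 < ln 2.
Proof. have := ln_lt_2; lra. Qed.

(* 2 ^ (log2 x) = x: log2 is Stdlib's Rlog 2. *)
Lemma Rpower2_log2 x : 0 < x -> Rpower 2 (log2 x) = x.
Proof. by move=> x0; have := @Rpower_Rlog 2 x; apply; lra. Qed.

Lemma Rpower2_le_of_le_log2 a b : 0 < a -> b <= log2 a -> Rpower 2 b <= a.
Proof.
by move=> a0 ba; rewrite -[X in _ <= X](Rpower2_log2 a0); apply: Rle_Rpower => //; lra.
Qed.

Lemma le_Rpower2_of_log2_le a b : 0 < a -> log2 a <= b -> a <= Rpower 2 b.
Proof.
by move=> a0 ab; rewrite -[X in X <= _](Rpower2_log2 a0); apply: Rle_Rpower => //; lra.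
Qed.

Lemma log2_mult a b : 0 < a -> 0 < b -> log2 (a * b) = log2 a + log2 b.
Proof. by move=> a0 b0; rewrite /log2 ln_mult // /Rdiv Rmult_plus_distr_r. Qed.

(* Stdlib's ln is total, with value 0 on nonpositive numbers. *)
Lemma ln_nonpos x : x <= 0 -> ln x = 0.
Proof. by move=> x0; unfold ln; case: Rlt_dec => // ?; exfalso; lra. Qed.

Lemma log2_le x y : 1 <= y -> x <= y -> log2 x <= log2 y.
Proof.
move=> y1 xy; rewrite /log2 /Rdiv; apply: Rmult_le_compat_r.
  by left; apply: Rinv_0_lt_compat; apply: ln2_pos.
have ln_mono a b : 0 < a -> a <= b -> ln a <= ln b.
  by move=> a0 [ab|<-]; [left; apply: ln_increasing | right].
case: (Rle_lt_dec x 0) => [x0|]; last by move=> x0; apply: ln_mono.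
have -> : ln x = 0 by apply: ln_nonpos.
by rewrite -ln_1; apply: ln_mono; lra.
Qed.

Lemma rate_condition a k e : 0 < k -> 0 < e -> log2 k >= a - log2 e ->
  Rpower 2 a <= e * k.
Proof.
move=> k0 e0 rate; apply: Rpower2_le_of_le_log2; first exact: Rmult_lt_0_compat.
by rewrite log2_mult //; lra.
Qed.

Lemma typical_prob_bounds (T : finType) (P : T -> R) d w : inA P d w ->
  Rpower 2 (- Xi_max P d) <= P w <= Rpower 2 (- Xi_min P d).
Proof.
case/and3P => /RltbP w0 /RlebP lo /RlebP hi; split.
- by apply: Rpower2_le_of_le_log2 => //; lra.
- by apply: le_Rpower2_of_log2_le => //; lra.
Qed.

Lemma Rinf_le (E : R -> Prop) m r :
  (forall x, E x -> m <= x) -> E r -> Rinf E <= r.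
Proof.
move=> lb Er.
have [l [ub_l least_l]] : {l | is_lub (fun y => E (- y)) l}.
  apply: completeness; first by exists (- m) => y /lb; lra.
  by exists (- r); rewrite Ropp_involutive.
have glb : is_glb E (- l).
  split=> [x Ex | b lb_b].
    by have := ub_l (- x); rewrite Ropp_involutive => /(_ Ex); lra.
  suff : l <= - b by lra.
  by apply: least_l => y /lb_b; lra.
by have [+ _] := epsilon_spec (inhabits 0) (is_glb E) (ex_intro _ _ glb); apply.
Qed.

(* The smoothing of W ~ P by a map h: the joint law of (W, h W).  It is a
   d-smoothing as soon as Pr[h W <> W] <= d, and h W lives in the range of h. *)
Definition map_smoothing (T : finType) (P : T -> R) (h : T -> T) (p : T * T) : R :=
  if p.2 == h p.1 then P p.1 else 0.

Lemma map_smoothing_row (T : finType) (P : T -> R) (h : T -> T) w :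
  \sum_(w' : T) map_smoothing P h (w, w') = P w.
Proof. by rewrite /map_smoothing /= -big_mkcond /= big_pred1_eq. Qed.

Lemma map_smoothingP (T : finType) (P : T -> R) (h : T -> T) d :
  is_pmf P -> \sum_(w | h w != w) P w <= d -> smoothing P d (map_smoothing P h).
Proof.
move=> [P0 P1] close; have split_pair (F : T * T -> R) :
    \sum_(p : T * T) F p = \sum_(w : T) \sum_(w' : T) F (w, w').
  by rewrite pair_bigA; apply: eq_bigr => -[].
split; [split | split] => [[w w']||w|].
- by rewrite /map_smoothing; case: eqP => _ //; lra.
- by rewrite split_pair -P1; apply: eq_bigr => w _; apply: map_smoothing_row.
- exact: map_smoothing_row.
- apply: Rle_trans close; rewrite big_mkcond split_pair [X in _ <= X]big_mkcond /=.
  right; apply: eq_bigr => w _; rewrite (bigD1 (h w)) //= /map_smoothing eqxx /=.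
  rewrite big1 => [|w' /negbTE w'h]; last by case: (w != w'); rewrite /= ?w'h.
  by rewrite Rplus_0_r eq_sym.
Qed.

Lemma map_smoothing_support (T : finType) (P : T -> R) (h : T -> T) w' :
  Rltb 0 (bar_law (map_smoothing P h) w') -> exists w, h w = w'.
Proof.
move=> /RltbP pos; apply: NNPP => none; move: pos; rewrite /bar_law big1; first lra.
by move=> w _; rewrite /map_smoothing /=; case: eqP => // hw; case: none; exists w.
Qed.

Lemma INR_le (m n : nat) : (m <= n)%nat -> INR m <= INR n.
Proof. by move/leP; apply: le_INR. Qed.

Lemma H0_le_map (T C : finType) (P : T -> R) e (h : T -> T) (f : C -> T) :
  is_pmf P -> \sum_(w | h w != w) P w <= e -> (forall w, exists c, h w = f c) ->
  (0 < #|C|)%nat -> H0 P e <= log2 (INR #|C|).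
Proof.
move=> hP close h_in_f C0; apply: log2_le; first exact: (INR_le C0).
apply: Rle_trans (Rinf_le (m := 0) _ _) _.
- by move=> x [Q [_ ->]]; apply: pos_INR.
- by exists (map_smoothing P h); split; [apply: map_smoothingP|].
- apply: INR_le; rewrite -cardsT; apply: leq_trans (leq_imset_card f _).
  apply: subset_leq_card; apply/subsetP => w'; rewrite inE.
  move=> /map_smoothing_support [w <-]; have [c ->] := h_in_f w.
  by apply/imsetP; exists c; rewrite ?inE.
Qed.

Lemma H0cond_le_map (A B C : finType) (P : A * B -> R) e (h : A * B -> A * B)
    (f : C -> B -> A) :
  is_pmf P -> \sum_(w | h w != w) P w <= e ->
  (forall w, exists c, h w = (f c w.2, w.2)) -> (0 < #|C|)%nat ->
  H0cond P e <= log2 (INR #|C|).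
Proof.
move=> hP close h_in_f C0; apply: log2_le; first exact: (INR_le C0).
apply: Rle_trans (Rinf_le (m := 0) _ _) _.
- by move=> x [Q [_ ->]]; apply: pos_INR.
- by exists (map_smoothing P h); split; [apply: map_smoothingP|].
- apply: INR_le; apply/bigmax_leqP => b _; rewrite /cond_supp_size.
  rewrite -cardsT; apply: leq_trans (leq_imset_card (f^~ b) _).
  apply: subset_leq_card; apply/subsetP => a; rewrite inE.
  move=> /map_smoothing_support [w hw]; have [c hc] := h_in_f w.
  by rewrite hc in hw; case: hw => <- <-; apply/imsetP; exists c; rewrite ?inE.
Qed.

Definition det_error (X Y CX CY : finType) (P : X * Y -> R)
    (eX : X -> CX) (eY : Y -> CY) (d : CX -> CY -> X * Y) : R :=
  \sum_(p | d (eX p.1) (eY p.2) != p) P p.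

Lemma exists_good_seed (X Y CX CY U : finType) (P : X * Y -> R) e
    (PU : U -> R) (eX : X * U -> CX) (eY : Y * U -> CY) :
  in_Lambda P e PU eX eY -> exists (d : CX -> CY -> X * Y) (u : U),
    det_error P (fun x => eX (x, u)) (fun y => eY (y, u)) d <= e.
Proof.
move=> [hPU [g err]].
have [u small] : exists u, \sum_(p | g (eX (p.1, u)) (eY (p.2, u)) u != p) P p <= e.
  apply: (pmf_average_le hPU); apply: Rle_trans err; right.
  rewrite (eq_bigr (fun p => \sum_u (if g (eX (p.1, u)) (eY (p.2, u)) u != p
                                      then P p * PU u else 0))); last first.
    by move=> p _; rewrite big_mkcond.
  rewrite [RHS]exchange_big; apply: eq_bigr => u _ /=.
  rewrite big_distrr big_mkcond /=; apply: eq_bigr => p _.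
  by case: ifP => _ //; rewrite Rmult_comm.
by exists (fun cx cy => g cx cy u), u.
Qed.

Definition swap_code (X Y CX CY : finType) (d : CX -> CY -> X * Y) :
  CY -> CX -> Y * X := fun cy cx => ((d cx cy).2, (d cx cy).1).

Lemma sum_swap (A B : finType) (S : pred (A * B)) (F : A * B -> R) :
  \sum_(p : B * A | S (p.2, p.1)) F (p.2, p.1) = \sum_(p : A * B | S p) F p.
Proof.
symmetry; apply: (reindex (fun p : B * A => (p.2, p.1))).
by apply: onW_bij; exists (fun p : A * B => (p.2, p.1)) => -[].
Qed.

Lemma is_pmf_swap (X Y : finType) (P : X * Y -> R) : is_pmf P -> is_pmf (swapP P).
Proof.
by move=> [P0 P1]; split=> [p|]; [apply: P0 | rewrite -P1; apply: (sum_swap xpredT)].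
Qed.

Lemma det_error_swap (X Y CX CY : finType) (P : X * Y -> R) eX eY
    (d : CX -> CY -> X * Y) :
  det_error (swapP P) eY eX (swap_code d) = det_error P eX eY d.
Proof.
rewrite /det_error -(sum_swap (fun p => d (eX p.1) (eY p.2) != p)) /swapP /=.
apply: eq_bigl => -[y x] /=; rewrite /swap_code.
by case: (d (eX x) (eY y)) => x' y'; rewrite !xpair_eqE andbC.
Qed.

Lemma H0cond_le_code (X Y CX CY : finType) (P : X * Y -> R) e eX eY
    (d : CX -> CY -> X * Y) :
  is_pmf P -> det_error P eX eY d <= e -> H0cond P e <= log2 (INR #|CX|).
Proof.
move=> hP err; have [[x _] _] := pmf_inhabited hP.
apply: (H0cond_le_map (h := fun w => ((d (eX w.1) (eY w.2)).1, w.2))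
          (f := fun cx y => (d cx (eY y)).1)) => //.
- apply: Rle_trans err; apply: sum_subset_le => [p|[x' y']]; first by case: hP.
  by apply: contraNN => /eqP /= ->.
- by move=> w; exists (eX w.1).
- by apply/card_gt0P; exists (eX x).
Qed.

Lemma H0_le_code (X Y CX CY : finType) (P : X * Y -> R) e eX eY
    (d : CX -> CY -> X * Y) :
  is_pmf P -> det_error P eX eY d <= e ->
  H0 P e <= log2 (INR #|CX|) + log2 (INR #|CY|).
Proof.
move=> hP err; have [[x y] _] := pmf_inhabited hP.
have CX0 : (0 < #|CX|)%nat by apply/card_gt0P; exists (eX x).
have CY0 : (0 < #|CY|)%nat by apply/card_gt0P; exists (eY y).
rewrite -log2_mult; try by apply: lt_0_INR; apply/ltP.
have -> : INR #|CX| * INR #|CY| = INR #|{: CX * CY}|.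
  by rewrite card_prod -multE mult_INR.
apply: (H0_le_map (h := fun w => d (eX w.1) (eY w.2)) (f := fun c => d c.1 c.2)) => //.
- by move=> w; exists (eX w.1, eY w.2).
- by rewrite card_prod muln_gt0 CX0 CY0.
Qed.

Lemma converse_bounds (X Y CX CY U : finType) (P : X * Y -> R) e (PU : U -> R)
    (eX : X * U -> CX) (eY : Y * U -> CY) :
  is_pmf P -> in_Lambda P e PU eX eY ->
  [/\ H0cond P e <= log2 (INR #|CX|), H0cond (swapP P) e <= log2 (INR #|CY|)
    & H0 P e <= log2 (INR #|CX|) + log2 (INR #|CY|)].
Proof.
move=> hP /exists_good_seed [d [u err]]; split.
- exact: H0cond_le_code err.
- by rewrite -det_error_swap in err; apply: H0cond_le_code (is_pmf_swap hP) err.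
- exact: H0_le_code err.
Qed.

(* For x <> x', a uniformly random function T -> C identifies x and x' with
   probability 1/|C|: f |-> (f updated at x' with f x, f x') is a bijection
   from functions onto pairs (function identifying x and x', value at x'). *)
Lemma card_identifying (T C : finType) (x x' : T) : x != x' ->
  (#|[set f : {ffun T -> C} | f x == f x']| * #|C|)%nat = #|{: {ffun T -> C}}|.
Proof.
move=> xx'; pose upd (f : {ffun T -> C}) c := [ffun z => if z == x' then c else f z].
pose split_f := fun f : {ffun T -> C} => (upd f (f x), f x').
have split_inj : injective split_f.
  move=> f1 f2 [/ffunP e1 e2]; apply/ffunP => z.
  case: (eqVneq z x') => [-> // | zx']; have := e1 z; rewrite !ffunE (negbTE zx') //.
rewrite -(cardsT C) -cardsX -[RHS]cardsT -(card_imset _ split_inj).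
apply: eq_card => -[f c].
rewrite !inE andbT; apply/idP/imsetP => [/eqP fxx' | [g _ [-> _]]].
- exists (upd f c); rewrite ?inE // /split_f !ffunE eqxx (negbTE xx'); congr (_, _).
  by apply/ffunP => z; rewrite !ffunE; case: eqP => [-> |].
- by rewrite /upd !ffunE eqxx (negbTE xx').
Qed.

Lemma card_identifyingR (T C : finType) (a b : T) : (0 < #|C|)%nat ->
  INR #|[set f : {ffun T -> C} | f a == f b]| =
  INR #|{: {ffun T -> C}}| * (if a == b then 1 else / INR #|C|).
Proof.
move=> C0; have C0R : 0 < INR #|C| by apply: lt_0_INR; apply/ltP.
case: (eqVneq a b) => [-> | ab].
  by rewrite Rmult_1_r; congr INR; apply: eq_card => f; rewrite !inE eqxx.
by rewrite -(card_identifying C ab) -multE mult_INR; field; lra.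
Qed.

Section RandomBinning.
(* Each source is hashed by an independent uniformly random function into its
   codebook; the shared randomness is the pair of hash functions. *)
Variables (X Y CX CY : finType).
Hypotheses (CX0 : (0 < #|CX|)%nat) (CY0 : (0 < #|CY|)%nat).

Local Notation binning := ({ffun X -> CX} * {ffun Y -> CY})%type.

Definition unif_binning (u : binning) : R := / INR #|{: binning}|.

Lemma binning_card_pos : 0 < INR #|{: binning}|.
Proof.
apply: lt_0_INR; apply/ltP; rewrite card_prod !card_ffun muln_gt0 !expn_gt0.
by rewrite CX0 CY0.
Qed.

Lemma unif_binning_pmf : is_pmf unif_binning.
Proof.
have U0 := binning_card_pos; split => [u|]; first by left; apply: Rinv_0_lt_compat.
rewrite /unif_binning (eq_bigl (fun u => u \in [set: binning])) ?sum_const => [|u].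
  by rewrite cardsT; apply: Rinv_r; apply: Rgt_not_eq.
by rewrite inE.
Qed.

Definition same_bins (q p : X * Y) (u : binning) : bool :=
  (u.1 q.1 == u.1 p.1) && (u.2 q.2 == u.2 p.2).

Definition collision_prob (q p : X * Y) : R :=
  (if q.1 == p.1 then 1 else / INR #|CX|) * (if q.2 == p.2 then 1 else / INR #|CY|).

Lemma same_bins_prob q p :
  \sum_(u | same_bins q p u) unif_binning u = collision_prob q p.
Proof.
rewrite sum_const /unif_binning.
have -> : #|same_bins q p| =
    (#|[set f : {ffun X -> CX} | f q.1 == f p.1]| *
     #|[set f : {ffun Y -> CY} | f q.2 == f p.2]|)%nat.
  by rewrite -cardsX; apply: eq_card => -[f g]; rewrite !inE.
rewrite -multE mult_INR !card_identifyingR // card_prod -multE mult_INR !card_ffun.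
rewrite /collision_prob; field.
by split; apply/not_0_INR/eqP; rewrite -lt0n expn_gt0 ?CX0 ?CY0.
Qed.

(* For q <> p, at least one coordinate differs, which pays a factor 1/|C|. *)
Lemma collision_prob_le q p : q != p ->
  collision_prob q p <= (if q.1 == p.1 then / INR #|CY| else 0) +
    (if q.2 == p.2 then / INR #|CX| else 0) + / INR #|CX| * / INR #|CY|.
Proof.
case: q p => [x' y'] [x y] qp; rewrite /collision_prob /=.
have iX : 0 < / INR #|CX| by apply: Rinv_0_lt_compat; apply: lt_0_INR; apply/ltP.
have iY : 0 < / INR #|CY| by apply: Rinv_0_lt_compat; apply: lt_0_INR; apply/ltP.
set a := / INR #|CX| in iX *; set b := / INR #|CY| in iY *.
have ab := Rmult_lt_0_compat _ _ iX iY.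
case: (eqVneq x' x) => [ex|_]; case: (eqVneq y' y) => [ey|_]; try lra.
by move: qp; rewrite ex ey eqxx.
Qed.

Definition bin_decoder (S : pred (X * Y)) (p0 : X * Y) (cx : CX) (cy : CY)
    (u : binning) : X * Y :=
  odflt p0 [pick q | S q && (u.1 q.1 == cx) && (u.2 q.2 == cy)].

Lemma bin_decoder_error (S : pred (X * Y)) (p0 p : X * Y) (u : binning) : S p ->
  bin_decoder S p0 (u.1 p.1) (u.2 p.2) u != p ->
  exists2 q, S q && (q != p) & same_bins q p u.
Proof.
rewrite /bin_decoder => Sp; case: pickP => [q /andP [/andP [Sq b1] b2] /= qp | none].
  by exists q; rewrite ?Sq ?qp //; apply/andP.
by have := none p; rewrite Sp !eqxx.
Qed.

Lemma bin_error_le (S : pred (X * Y)) (p0 p : X * Y) : S p ->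
  \sum_(u : binning | bin_decoder S p0 (u.1 p.1) (u.2 p.2) u != p) unif_binning u <=
  \sum_(q | S q && (q != p)) collision_prob q p.
Proof.
move=> Sp; have cover u := @bin_decoder_error S p0 p u Sp.
apply: Rle_trans (union_bound (F := unif_binning) _ cover) _.
  by move=> u; left; apply: Rinv_0_lt_compat; apply: binning_card_pos.
by right; apply: eq_bigr => q _; apply: same_bins_prob.
Qed.
End RandomBinning.

Lemma le_div_of_le_mul a e k : 0 < k -> a <= e * k -> a * / k <= e.
Proof.
move=> k0 ale; apply: (Rmult_le_reg_r k) => //.
by rewrite Rmult_assoc Rinv_l ?Rmult_1_r //; lra.
Qed.

Lemma sum_if_const (I : finType) (S c : pred I) a :
  \sum_(i | S i) (if c i then a else 0) = INR #|[pred i | S i && c i]| * a.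
Proof. by rewrite -big_mkcondr sum_const. Qed.

Lemma sum_fst_eq (X Y : finType) (P : X * Y -> R) x :
  \sum_(q : X * Y | q.1 == x) P q = margX P x.
Proof.
have -> : margX P x = \sum_(x' | x' == x) \sum_(y : Y) P (x', y) by rewrite big_pred1_eq.
by rewrite pair_big_dep; apply: eq_big => -[x' y] //=; rewrite andbT.
Qed.

Lemma sum_snd_eq (X Y : finType) (P : X * Y -> R) y :
  \sum_(q : X * Y | q.2 == y) P q = margY P y.
Proof.
have -> : margY P y = \sum_(x : X) \sum_(y' | y' == y) P (x, y').
  by apply: eq_bigr => x _; rewrite big_pred1_eq.
by rewrite pair_big_dep; apply: eq_big => -[x y'].
Qed.

Lemma typical_count (T : finType) (P : T -> R) d (S c : pred T) :
  (forall q, 0 <= P q) -> (forall q, S q -> inA P d q) ->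
  INR #|[pred q | S q && c q]| <= Rpower 2 (Xi_max P d) * \sum_(q | c q) P q.
Proof.
move=> P0 typ; have pos : 0 < Rpower 2 (Xi_max P d) by apply: exp_pos.
rewrite -[X in X <= _]Rmult_1_r -sum_const.
apply: Rle_trans (_ : \sum_(q | S q && c q) Rpower 2 (Xi_max P d) * P q <= _).
  apply: sum_le => q /andP [/typ /typical_prob_bounds [lo _] _].
  rewrite Rpower_Ropp in lo.
  apply: Rle_trans (Rmult_le_compat_l _ _ _ (Rlt_le _ _ pos) lo).
  by rewrite Rinv_r; lra.
rewrite -big_distrr /=; apply: Rmult_le_compat_l; first by left.
by apply: sum_subset_le => // q /andP [].
Qed.

Lemma count_rate_le (N : nat) M m b e k : 0 < k -> INR N <= Rpower 2 M * m ->
  m <= Rpower 2 (- b) -> Rpower 2 (M - b) <= e * k -> INR N * / k <= e.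
Proof.
move=> k0 Nm mb rate; apply: le_div_of_le_mul => //; apply: Rle_trans rate.
rewrite /Rminus Rpower_plus; apply: Rle_trans Nm _.
by apply: Rmult_le_compat_l => //; left; apply: exp_pos.
Qed.

Lemma typical_collisions_le (X Y CX CY : finType) (P : X * Y -> R) d e1 e2 e3 p :
  is_pmf P -> (0 < #|CX|)%nat -> (0 < #|CY|)%nat ->
  Rpower 2 (Xi_max P d - Xi_min (margY P) d) <= e1 * INR #|CX| ->
  Rpower 2 (Xi_max P d - Xi_min (margX P) d) <= e2 * INR #|CY| ->
  Rpower 2 (Xi_max P d) <= e3 * (INR #|CX| * INR #|CY|) ->
  inA_joint P d p ->
  \sum_(q | inA_joint P d q && (q != p)) collision_prob CX CY q p <= e1 + e2 + e3.
Proof.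
move=> [P0 P1] CX0 CY0 rateX rateY rateXY typ_p.
have kX : 0 < INR #|CX| by apply: lt_0_INR; apply/ltP.
have kY : 0 < INR #|CY| by apply: lt_0_INR; apply/ltP.
set typ := inA_joint P d.
have typ_inA q : typ q -> inA P d q by case/and3P.
have [_ typ_pX typ_pY] := and3P typ_p.
pose B q := (if q.1 == p.1 then / INR #|CY| else 0) +
            (if q.2 == p.2 then / INR #|CX| else 0) + / INR #|CX| * / INR #|CY|.
have B0 q : 0 <= B q.
  have iX := Rinv_0_lt_compat _ kX; have iY := Rinv_0_lt_compat _ kY.
  have := Rmult_lt_0_compat _ _ iX iY.
  by rewrite /B; case: ifP; case: ifP; lra.
apply: Rle_trans (_ : \sum_(q | typ q) B q <= _).
  have sub q : typ q && (q != p) -> typ q by case/andP.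
  apply: Rle_trans (sum_subset_le B0 sub).
  by apply: sum_le => q /andP [_]; apply: collision_prob_le.
rewrite /B !big_split /= !sum_if_const sum_const.
have t1 : INR #|[pred q | typ q & q.2 == p.2]| * / INR #|CX| <= e1.
  apply: (count_rate_le (M := Xi_max P d) (m := margY P p.2) (b := Xi_min (margY P) d)) => //.
  - by rewrite -sum_snd_eq; apply: typical_count.
  - by have [_] := typical_prob_bounds typ_pY.
have t2 : INR #|[pred q | typ q & q.1 == p.1]| * / INR #|CY| <= e2.
  apply: (count_rate_le (M := Xi_max P d) (m := margX P p.1) (b := Xi_min (margX P) d)) => //.
  - by rewrite -sum_fst_eq; apply: typical_count.
  - by have [_] := typical_prob_bounds typ_pX.
have t3 : INR #|typ| * (/ INR #|CX| * / INR #|CY|) <= e3.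
  rewrite -Rinv_mult; apply: le_div_of_le_mul; first exact: Rmult_lt_0_compat.
  apply: Rle_trans rateXY; have := typical_count xpredT P0 typ_inA.
  rewrite (eq_card (B := typ)) => [|q]; last by rewrite !inE andbT.
  by rewrite [\sum_(q | _) _]P1 Rmult_1_r.
by apply: Rle_trans (Rplus_le_compat _ _ _ _ (Rplus_le_compat _ _ _ _ t2 t1) t3) _; lra.
Qed.

Lemma average_error_le (T U : finType) (P : T -> R) (PU : U -> R)
    (err : T -> pred U) (S : pred T) a e0 :
  is_pmf P -> 0 <= a ->
  (forall p, \sum_(u | err p u) PU u <= if S p then a else 1) ->
  \sum_(p | ~~ S p) P p <= e0 ->
  \sum_p \sum_(u | err p u) (P p * PU u) <= a + e0.
Proof.
move=> [P0 P1] a0 err_le atyp.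
apply: Rle_trans (_ : \sum_p P p * (if S p then a else 1) <= _).
  by apply: sum_le => p _; rewrite -big_distrr; apply: Rmult_le_compat_l.
rewrite (bigID S) /= (eq_bigr (fun p => P p * a)) => [|p ->] //.
rewrite [X in _ + X](eq_bigr P) => [|p /negbTE ->]; last by rewrite Rmult_1_r.
have typ_le : \sum_(p | S p) P p <= 1.
  by rewrite -P1; apply: sum_subset_le.
rewrite -big_distrl /=; have := Rmult_le_compat_r _ _ _ a0 typ_le.
lra.
Qed.

Lemma binning_achievability (X Y CX CY : finType) (P : X * Y -> R)
    eps e0 e1 e2 e3 delta :
  is_pmf P -> 0 < e1 -> 0 < e2 -> 0 < e3 -> e0 + e1 + e2 + e3 <= eps ->
  prob_notA P delta <= e0 -> (0 < #|CX|)%nat -> (0 < #|CY|)%nat ->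
  log2 (INR #|CX|) >= Xi_max P delta - Xi_min (margY P) delta - log2 e1 ->
  log2 (INR #|CY|) >= Xi_max P delta - Xi_min (margX P) delta - log2 e2 ->
  log2 (INR #|CX|) + log2 (INR #|CY|) >= Xi_max P delta - log2 e3 ->
  exists (PU : {ffun X -> CX} * {ffun Y -> CY} -> R)
         (eX : X * ({ffun X -> CX} * {ffun Y -> CY}) -> CX)
         (eY : Y * ({ffun X -> CX} * {ffun Y -> CY}) -> CY),
    in_Lambda P eps PU eX eY.
Proof.
move=> hP e1_0 e2_0 e3_0 hsum atyp CX0 CY0 rateX rateY rateXY.
have kX : 0 < INR #|CX| by apply: lt_0_INR; apply/ltP.
have kY : 0 < INR #|CY| by apply: lt_0_INR; apply/ltP.
rewrite -log2_mult // in rateXY.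
have [p0 _] := pmf_inhabited hP.
have U1 := unif_binning_pmf X Y CX0 CY0.
exists (@unif_binning X Y CX CY).
exists (fun xu : X * ({ffun X -> CX} * {ffun Y -> CY}) => xu.2.1 xu.1).
exists (fun yu : Y * ({ffun X -> CX} * {ffun Y -> CY}) => yu.2.2 yu.1).
split=> //; exists (bin_decoder (inA_joint P delta) p0).
apply: Rle_trans (average_error_le (a := e1 + e2 + e3) hP _ _ atyp) _; try lra.
move=> p; case: ifP => typ_p.
- apply: Rle_trans (bin_error_le CX0 CY0 p0 typ_p) _.
  apply: typical_collisions_le => //; apply: rate_condition => //.
  exact: Rmult_lt_0_compat.
- rewrite -(proj2 U1); apply: sum_subset_le => // u.
  by left; apply: Rinv_0_lt_compat; apply: binning_card_pos CX0 CY0.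
Qed.

Theorem theorem1 (X Y : finType) (P : X * Y -> R) (hP : is_pmf P)
  (eps e0 e1 e2 e3 : R) (heps : 0 < eps) (heps1 : eps <= 1)
  (he0 : 0 < e0) (he1 : 0 < e1) (he2 : 0 < e2) (he3 : 0 < e3)
  (hsum : e0 + e1 + e2 + e3 <= eps) :
  (forall (CX CY U : finType) (PU : U -> R) (eX : X * U -> CX) (eY : Y * U -> CY),
     in_Lambda P eps PU eX eY ->
     log2 (INR #|CX|) >= H0cond P eps /\
     log2 (INR #|CY|) >= H0cond (swapP P) eps /\
     log2 (INR #|CX|) + log2 (INR #|CY|) >= H0 P eps) /\
  (forall delta : R, 0 <= delta -> prob_notA P delta <= e0 ->
   forall CX CY : finType, 0 < INR #|CX| -> 0 < INR #|CY| ->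
     log2 (INR #|CX|) >= Xi_max P delta - Xi_min (margY P) delta - log2 e1 ->
     log2 (INR #|CY|) >= Xi_max P delta - Xi_min (margX P) delta - log2 e2 ->
     log2 (INR #|CX|) + log2 (INR #|CY|) >= Xi_max P delta - log2 e3 ->
     exists (U : finType) (PU : U -> R) (eX : X * U -> CX) (eY : Y * U -> CY),
       in_Lambda P eps PU eX eY).
Proof.
split.
- move=> CX CY U PU eX eY protocol.
  by have [bX bY bXY] := converse_bounds hP protocol; split; [|split]; apply: Rle_ge.
- move=> delta _ atyp CX CY kX kY rateX rateY rateXY.
  have CX0 : (0 < #|CX|)%nat by apply/ltP; apply: INR_lt.
  have CY0 : (0 < #|CY|)%nat by apply/ltP; apply: INR_lt.
  have [PU [eX [eY protocol]]] :=
    binning_achievability hP he1 he2 he3 hsum atyp CX0 CY0 rateX rateY rateXY.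
  by exists ({ffun X -> CX} * {ffun Y -> CY})%type, PU, eX, eY.
Qed.
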